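(* Let $A,W\in \mathbb{C}^{n\times n}$. Then $A^{\mathrm{cEP},W}=(A^{D,W})^2(A^{D,W})^{(1,3)_W}$.
   Context: $\mathbb{C}^{n\times n}$ carries the conjugate transpose involution. With $k=\max\{\mathrm{ind}(AW),\mathrm{ind}(WA)\}$, the weighted core-EP inverse $A^{\mathrm{cEP},W}$ is the unique $X$ with $WAWX=(WA)^k[(WA)^k]^{\dagger}$ and $\mathcal{R}(X)\subseteq\mathcal{R}((AW)^k)$. $A^{D,W}$ is the $W$-weighted Drazin inverse of $A$. A weighted $(1,3,W)$-inverse of $B$ is any $X$ with $B=BWXWB$ and $(WBWX)^*=WBWX$, denoted $B^{(1,3)_W}$. *)

(* Complex matrices are modelled over an arbitrary
   numClosedFieldType C (this includes the genuine complex numbers R[i],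
   R : realType), with conjugation Num.conj. *)
From HB Require Import structures.
From mathcomp Require Import all_boot all_order all_algebra.
Set Implicit Arguments. Unset Strict Implicit. Unset Printing Implicit Defensive.
Import Order.TTheory GRing.Theory Num.Theory.
Local Open Scope ring_scope.

Section Defs.
Variable C : numClosedFieldType.

Definition ctr (m n : nat) (M : 'M[C]_(m, n)) : 'M[C]_(n, m) :=
  (map_mx Num.conj M)^T.

Definition ind (n : nat) (M : 'M[C]_n) : nat :=
  find (fun k => \rank (M ^+ k) == \rank (M ^+ k.+1)) (iota 0 n.+1).

Definition is_MP (m n : nat) (M : 'M[C]_(m, n)) (X : 'M[C]_(n, m)) : Prop :=
  [/\ M *m X *m M = M, X *m M *m X = X,
      ctr (M *m X) = M *m X & ctr (X *m M) = X *m M].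

Definition is_WDrazin (n : nat) (A W X : 'M[C]_n) : Prop :=
  let k := ind (A *m W) in
  [/\ (A *m W) ^+ k.+1 *m X *m W = (A *m W) ^+ k,
      X *m W *m A *m W *m X = X &
      A *m W *m X = X *m W *m A].

Definition is_WcEP (n : nat) (A W X : 'M[C]_n) : Prop :=
  let k := maxn (ind (A *m W)) (ind (W *m A)) in
  (exists P, is_MP ((W *m A) ^+ k) P /\
             W *m A *m W *m X = (W *m A) ^+ k *m P) /\
  (exists Y, X = (A *m W) ^+ k *m Y).

Definition is_13W (n : nat) (B W X : 'M[C]_n) : Prop :=
  B = B *m W *m X *m W *m B /\ ctr (W *m B *m W *m X) = W *m B *m W *m X.

End Defs.

From HB Require Import structures.
From mathcomp Require Import all_boot all_order all_algebra.
Set Implicit Arguments. Unset Strict Implicit. Unset Printing Implicit Defensive.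
Import Order.TTheory GRing.Theory Num.Theory.
Local Open Scope ring_scope.

(* With a := AW and b := WA, the weighted Drazin equations give
   a^m = DW a^(m+1), so E = a^m Y satisfies E = DW a E = D (WAWE) = D Q, where
   Q := b^m (b^m)^dagger is the orthogonal projector onto R(b^m).  They also
   give R(WD) = R(b^m) (the inclusion from right to left needs ind(WA) <= m).
   The matrix S := WDWZ is Hermitian, maps into R(WD) and fixes WD; since an
   orthogonal projector is determined by its range, S = Q and
   D W D W Z = D S = D Q = E. *)

Section RingLemmas.
Variable R : pzRingType.

Lemma exprS_rfactor_le (x t : R) i m : (i <= m)%N ->
  x ^+ i = x ^+ i.+1 * t -> x ^+ m = x ^+ m.+1 * t.
Proof. by move=> le_im xi; rewrite -(subnK le_im) -addnS !exprD xi mulrA. Qed.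

Lemma exprS_mul_rot (x y : R) j : (x * y) ^+ j.+1 = x * (y * x) ^+ j * y.
Proof.
elim: j => [|j IHj]; first by rewrite expr1 expr0 mulr1.
by rewrite exprS IHj exprS !mulrA.
Qed.

Lemma lfixed_expr (u e : R) j : e = u * e -> e = u ^+ j * e.
Proof. by move=> fix_e; elim: j => [|j IHj]; rewrite ?mul1r // exprSr -mulrA -fix_e. Qed.

End RingLemmas.

Section WeightedDrazinAlgebra.
Variables (R : pzRingType) (A W D : R) (k : nat).
Hypotheses (drazin_pow : (A * W) ^+ k.+1 * D * W = (A * W) ^+ k)
  (drazin_outer : D * W * A * W * D = D) (drazin_comm : A * W * D = D * W * A).

Lemma commr_AW_DW : GRing.comm (A * W) (D * W).
Proof. by rewrite /GRing.comm mulrA drazin_comm !mulrA. Qed.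

Lemma commr_WD_WA : GRing.comm (W * D) (W * A).
Proof. by rewrite /GRing.comm -!mulrA [D * (W * A)]mulrA -drazin_comm !mulrA. Qed.

Lemma expr_AW_lfactor m : (k <= m)%N -> (A * W) ^+ m = D * W * (A * W) ^+ m.+1.
Proof.
move=> le_km; have drazin_pow_r : (A * W) ^+ k = (A * W) ^+ k.+1 * (D * W).
  by rewrite mulrA drazin_pow.
rewrite (exprS_rfactor_le le_km drazin_pow_r).
exact/esym/commrX/commr_sym/commr_AW_DW.
Qed.

Lemma WD_expr_WA_lfactor j : W * D = (W * A) ^+ j * (W * D) ^+ j.+1.
Proof.
have fixWD : W * D = (W * A * (W * D)) * (W * D).
  by rewrite -commr_WD_WA -{1}drazin_outer !mulrA.
rewrite exprSr mulrA -exprMn_comm; last exact/commr_sym/commr_WD_WA.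
exact: lfixed_expr.
Qed.

Lemma exprS_WA_lfactor m : (k <= m)%N ->
  (W * A) ^+ m.+1 = W * D * (W * (A * W) ^+ m.+1 * A).
Proof. by move=> le_km; rewrite exprS_mul_rot (expr_AW_lfactor le_km) !mulrA. Qed.

End WeightedDrazinAlgebra.

Section HermitianProjectors.
Variable C : numClosedFieldType.

Lemma ctr_mul m n p (X : 'M[C]_(m, n)) (Y : 'M[C]_(n, p)) :
  ctr (X *m Y) = ctr Y *m ctr X.
Proof. by rewrite /ctr map_mxM trmx_mul. Qed.

Lemma eq_hermitian_projectors n m (B : 'M[C]_(n, m)) (P Q : 'M[C]_n) X Y :
  ctr P = P -> ctr Q = Q -> P *m B = B -> Q *m B = B ->
  P = B *m X -> Q = B *m Y -> P = Q.
Proof.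
move=> hermP hermQ PB QB PX QY.
have QP : Q *m P = P by rewrite PX mulmxA QB.
have PQ : P *m Q = Q by rewrite QY mulmxA PB.
by rewrite -hermP -QP ctr_mul hermP hermQ PQ.
Qed.

End HermitianProjectors.

Lemma has_stable_step (f : nat -> nat) n :
  (forall i, f i.+1 <= f i)%N -> (f 0 <= n)%N ->
  has (fun i => f i == f i.+1) (iota 0 n.+1).
Proof.
move=> f_noninc f0n; apply/negPn/negP => /hasPn no_step.
have strict_drop i : (i <= n.+1)%N -> (f i + i <= f 0)%N.
  elim: i => [|i IHi] le_in; first by rewrite addn0.
  have lt_fi : (f i.+1 < f i)%N.
    rewrite ltn_neqAle f_noninc andbT eq_sym.
    by apply: no_step; rewrite mem_iota.
  by rewrite addnS -addSn (leq_trans _ (IHi (ltnW le_in))) ?leq_add2r.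
by have := leq_trans (strict_drop _ (leqnn _)) f0n; rewrite addnS ltnNge leq_addl.
Qed.

Section Index.
Variables (C : numClosedFieldType) (n : nat) (M : 'M[C]_n).

Lemma rank_expr_ind : \rank (M ^+ ind M) = \rank (M ^+ (ind M).+1).
Proof.
have rank_noninc i : (\rank (M ^+ i.+1) <= \rank (M ^+ i))%N.
  by rewrite exprS -mulmxE mxrankM_maxr.
have rank0 : (\rank (M ^+ 0) <= n)%N by rewrite rank_leq_col.
have /[dup] /(nth_find 0%N) /eqP := has_stable_step rank_noninc rank0.
rewrite /ind has_find size_iota => eq_rank lt_ind.
by rewrite nth_iota ?add0n in eq_rank.
Qed.

Lemma expr_ind_rfactor m : (ind M <= m)%N -> exists T, M ^+ m = M ^+ m.+1 * T.
Proof.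
move=> le_im; set k := ind M in le_im.
have sub_S : ((M ^+ k.+1)^T <= (M ^+ k)^T)%MS.
  by rewrite exprSr -mulmxE trmx_mul submxMl.
have /submxP[T eqT] : ((M ^+ k)^T <= (M ^+ k.+1)^T)%MS.
  by have := mxrank_leqif_sup sub_S; rewrite !mxrank_tr rank_expr_ind => -[_ <-].
exists T^T; apply: exprS_rfactor_le le_im _.
by rewrite -mulmxE -[M ^+ k]trmxK eqT trmx_mul trmxK.
Qed.

End Index.

Theorem corollary4p5 (C : numClosedFieldType) (n : nat) (A W : 'M[C]_n)
    (E D Z : 'M[C]_n) :
  is_WcEP A W E -> is_WDrazin A W D -> is_13W D W Z ->
  E = D *m W *m D *m W *m Z.
Proof.
rewrite /is_WcEP /is_WDrazin /is_13W; set m := maxn _ _.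
move=> [[P [[MP_fix _ MP_herm _] EP]] [Y EY]] [drazin_pow drazin_outer drazin_comm].
move=> [Z_inner Z_herm]; rewrite !mulmxE in Z_inner EP EY drazin_pow drazin_outer drazin_comm.
have le_AW_m : (ind (A * W) <= m)%N by rewrite leq_maxl.
have le_WA_m : (ind (W * A) <= m)%N by rewrite leq_maxr.
have [T bT] := expr_ind_rfactor le_WA_m.
set b := (W *m A) ^+ m in bT MP_fix MP_herm EP.
have -> : E = D *m (b *m P).
  rewrite mulmxE -EP EY {1}(expr_AW_lfactor drazin_pow drazin_comm le_AW_m).
  by rewrite exprS !mulrA.
rewrite -!mulmxA; congr (D *m _); rewrite !mulmxA.
have WD_fixed : W * D * W * Z * W * D = W * D by rewrite [in RHS]Z_inner !mulrA.
apply: (eq_hermitian_projectors (B := b) (X := P) (Y := (W * D) ^+ m.+1 * W * Z)) => //.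
- by rewrite bT !mulmxE (exprS_WA_lfactor drazin_pow drazin_comm le_AW_m) !mulrA WD_fixed.
- by rewrite !mulmxE {1}(WD_expr_WA_lfactor drazin_outer drazin_comm m) !mulrA.
Qed.
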